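(* Let $U$, $s$ and $r$ be as follows: $n\ge3$, $s$ an $n$-bit string with $s_1=0,s_2=1$, $U$ an $n$-qubit unitary with $U|0^n\rangle=|0^n\rangle$ preserving the span $\mathcal S$ of basis states $|y\rangle$ with $y$ a Fibonacci string with $y_1=0,y_2=1$, and $|s\rangle\in\mathcal S$; $r\in\{-1,0,1\}$ is the output of the control-free echo-verification circuit described in the context. Let $r'=(-1)^x$ where $x$ is the outcome of measuring the ancilla in the vanilla Hadamard test: an ancilla in $|0\rangle$ and a register in $|s\rangle$, apply $H$ to the ancilla, apply controlled-$U$ (controlled on the ancilla), apply $H$ to the ancilla, measure the ancilla. Then $\mathbb E[r']=\mathrm{Re}\langle s|U|s\rangle$, $\mathrm{Var}(r')=1-(\mathrm{Re}\langle s|U|s\rangle)^2$, and $$\mathrm{Var}(r)=\mathrm{Var}(r')-\frac{1-|\langle s|U|s\rangle|^2}{2}\le \mathrm{Var}(r'),$$ with equality if and only if $|\langle s|U|s\rangle|=1$.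
   Context: A Fibonacci string is a bit string with no two consecutive zeros. The control-free echo-verification circuit: let $V$ be the $n$-qubit unitary with $V|0x_2\cdots x_n\rangle=|x_2 0 x_3\cdots x_n\rangle$ and $V|1x_2\cdots x_n\rangle=|x_2 1 (x_3\oplus s_3)\cdots(x_n\oplus s_n)\rangle$; starting from $|0^n\rangle$ apply $H$ on qubit 1, then $V$, $U$, $V^\dagger$, $H$ on qubit 1, and measure all qubits obtaining $x_1,\dots,x_n$; set $r=(-1)^{x_1}$ if $x_2=\cdots=x_n=0$ and $r=0$ otherwise. *)

(* Amplitudes live in an arbitrary numeric closed field C
   (e.g. the complex numbers); probabilities/expectations are elements of C
   that are real. *)
From HB Require Import structures.
From mathcomp Require Import all_boot all_order all_algebra.
Set Implicit Arguments. Unset Strict Implicit. Unset Printing Implicit Defensive.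
Import Order.TTheory GRing.Theory Num.Theory.
Local Open Scope ring_scope.

Section Quantum.
Variable C : numClosedFieldType.

(* Operators on the Hilbert space with computational basis T (a finType)
   are given by their matrix entries A y x = <y|A|x>; states by amplitudes. *)
Definition appl (T : finType) (A : T -> T -> C) (v : T -> C) : T -> C :=
  fun y => \sum_x A y x * v x.
Definition ket (T : finType) (x : T) : T -> C := fun y => (y == x)%:R.
Definition inner (T : finType) (u v : T -> C) : C := \sum_x (u x)^* * v x.
Definition unitary (T : finType) (A : T -> T -> C) : Prop :=
  forall x y : T, \sum_z (A z x)^* * A z y = (x == y)%:R.

Definition hadC (a b : bool) : C := (if a && b then -1 else 1) / sqrtC 2.

Variable n : nat.
(* n-bit strings; qubit k (1-based in the paper) is index k-1 here *)
Definition bits := (n.-tuple bool).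
Definition bit (x : bits) (k : nat) : bool := nth false x k.
Definition zeros : bits := [tuple false | _ < n].

Definition fibonacci (y : bits) : bool :=
  [forall i : 'I_n, (i.+1 < n)%N ==> (bit y i || bit y i.+1)].
Definition goodS (y : bits) : bool :=
  [&& fibonacci y, ~~ bit y 0 & bit y 1].
Definition inS (v : bits -> C) : Prop := forall y, ~~ goodS y -> v y = 0.

Definition H1 (y x : bits) : C :=
  if [forall i : 'I_n, ((i : nat) != 0%N) ==> (tnth y i == tnth x i)]
  then hadC (bit y 0) (bit x 0) else 0.

Definition vmap (s x : bits) : bits :=
  [tuple (if (i : nat) == 0%N then bit x 1
          else if (i : nat) == 1%N then bit x 0
          else xorb (bit x i) (bit x 0 && bit s i)) | i < n].
Definition Vop (s : bits) (y x : bits) : C := (y == vmap s x)%:R.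
Definition Vdag (s : bits) (y x : bits) : C := (Vop s x y)^*.

Definition echo_state (s : bits) (U : bits -> bits -> C) : bits -> C :=
  appl H1 (appl (Vdag s) (appl U (appl (Vop s) (appl H1 (ket zeros))))).
Definition echo_prob s U (x : bits) : C := `|echo_state s U x| ^+ 2.
Definition echo_r (x : bits) : C :=
  if [forall i : 'I_n, ((i : nat) != 0%N) ==> ~~ tnth x i]
  then (if bit x 0 then -1 else 1) else 0.
Definition echo_mean s U : C := \sum_x echo_prob s U x * echo_r x.
Definition echo_var s U : C :=
  \sum_x echo_prob s U x * (echo_r x) ^+ 2 - (echo_mean s U) ^+ 2.

(* vanilla Hadamard test: ancilla (bool) and register (bits) *)
Definition HA (p q : bool * bits) : C := hadC p.1 q.1 * (p.2 == q.2)%:R.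
Definition CU (U : bits -> bits -> C) (p q : bool * bits) : C :=
  (p.1 == q.1)%:R * (if q.1 then U p.2 q.2 else (p.2 == q.2)%:R).
Definition htest_state (s : bits) (U : bits -> bits -> C) : bool * bits -> C :=
  appl HA (appl (CU U) (appl HA (ket (false, s)))).
Definition htest_prob s U (a : bool) : C :=
  \sum_y `|htest_state s U (a, y)| ^+ 2.
Definition htest_r (a : bool) : C := if a then -1 else 1.
Definition htest_mean s U : C := \sum_a htest_prob s U a * htest_r a.
Definition htest_var s U : C :=
  \sum_a htest_prob s U a * (htest_r a) ^+ 2 - (htest_mean s U) ^+ 2.

End Quantum.

From HB Require Import structures.
From mathcomp Require Import all_boot all_order all_algebra.
From mathcomp Require Import ring.
Import Order.TTheory GRing.Theory Num.Theory.
Set Implicit Arguments. Unset Strict Implicit.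
Local Open Scope ring_scope.

(* In the echo
   circuit, V maps (|0^n> + |10^(n-1)>)/sqrt 2 to (|0^n> + |s>)/sqrt 2; as U
   fixes |0^n> (and hence, being unitary, sends |s> into the orthogonal
   complement of |0^n>), the final Hadamard leaves the amplitudes
   (1 +- <s|U|s>)/2 on the only two outcomes with r <> 0.  Hence
   E[r] = Re m and E[r^2] = (1 + |m|^2)/2, while the Hadamard test has outcome
   probabilities (1 +- Re m)/2.  The two variances differ by (1 - |m|^2)/2,
   which is nonnegative because |m| <= 1, and vanishes exactly when |m| = 1. *)

Section KroneckerSums.
Variables (R : pzSemiRingType) (T : finType).

Lemma sum_mul_delta (a : T) (F : T -> R) : \sum_x F x * (x == a)%:R = F a.
Proof.
rewrite (bigD1 a) //= eqxx mulr1 big1 ?addr0 // => x /negbTE ->.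
by rewrite mulr0.
Qed.

Lemma sum_delta_mul (a : T) (F : T -> R) : \sum_x (x == a)%:R * F x = F a.
Proof.
rewrite (bigD1 a) //= eqxx mul1r big1 ?addr0 // => x /negbTE ->.
by rewrite mul0r.
Qed.

Lemma sum_bool_pair (F : bool * T -> R) :
  \sum_q F q = \sum_y F (true, y) + \sum_y F (false, y).
Proof.
rewrite (eq_bigr (fun q => F (q.1, q.2))); last by case.
by rewrite -(pair_bigA _ (fun b y => F (b, y))) big_bool.
Qed.

End KroneckerSums.

Lemma invsqrtC2_sqr (C : numClosedFieldType) : (sqrtC 2)^-1 ^+ 2 = 2^-1 :> C.
Proof. by rewrite exprVn sqrtCK. Qed.

Lemma sqrnormC_1D (C : numClosedFieldType) (m : C) :
  `|1 + m| ^+ 2 = 1 + 2 * 'Re m + `|m| ^+ 2.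
Proof. by rewrite !normCK ReE rmorphD rmorph1; field. Qed.

Section Operators.
Variables (C : numClosedFieldType) (T : finType).
Implicit Types (A : T -> T -> C) (v w : T -> C).

Lemma eq_appl A v w y : (forall x, v x = w x) -> appl A v y = appl A w y.
Proof. by move=> vw; apply: eq_bigr => x _; rewrite vw. Qed.

Lemma appl_ket A x y : appl A (ket C x) y = A y x.
Proof. exact: sum_mul_delta. Qed.

Lemma appl_add A v w y :
  appl A (fun x => v x + w x) y = appl A v y + appl A w y.
Proof. by rewrite /appl -big_split; apply: eq_bigr => x _; rewrite mulrDr. Qed.

Lemma appl_scale A (a : C) v y : appl A (fun x => a * v x) y = a * appl A v y.
Proof. by rewrite /appl mulr_sumr; apply: eq_bigr => x _; rewrite mulrCA. Qed.

Lemma inner_ket_appl A x : inner (ket C x) (appl A (ket C x)) = A x x.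
Proof.
rewrite /inner; under eq_bigr => y _ do rewrite /ket conjC_nat.
by rewrite sum_delta_mul appl_ket.
Qed.

Lemma unitary_col_norm A x : unitary A -> \sum_z `|A z x| ^+ 2 = 1.
Proof.
move=> uA; transitivity ((x == x)%:R : C); last by rewrite eqxx.
by rewrite -uA; apply: eq_bigr => z _; rewrite normCKC.
Qed.

Lemma unitary_entry_norm_le1 A y x : unitary A -> `|A y x| ^+ 2 <= 1.
Proof.
move=> /(unitary_col_norm x) <-; rewrite (bigD1 y) //= lerDl.
by rewrite sumr_ge0 // => z _; rewrite exprn_ge0.
Qed.

Lemma unitary_fixed_row A x x' :
  unitary A -> (forall y, A y x = (y == x)%:R) -> x != x' -> A x x' = 0.
Proof.
move=> uA Ax /negbTE xx'; have := uA x x'.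
under eq_bigr => z _ do rewrite Ax conjC_nat.
by rewrite sum_delta_mul xx'.
Qed.

End Operators.

Section BitStrings.
Variables (C : numClosedFieldType) (n : nat).
Implicit Types x y z : bits n.

Definition e1 : bits n := [tuple (i : nat) == 0%N | i < n].

Definition tail_clear x : bool :=
  [forall i : 'I_n, ((i : nat) != 0%N) ==> ~~ tnth x i].

Lemma bit_tnth x (i : 'I_n) : bit x i = tnth x i.
Proof. by rewrite /bit (tnth_nth false). Qed.

Lemma bit_zeros k : bit (zeros n) k = false.
Proof.
have [kn|nk] := ltnP k n.
  by rewrite (bit_tnth _ (Ordinal kn)) tnth_mktuple.
by rewrite /bit nth_default // size_tuple.
Qed.

Lemma bit_e1 k : bit e1 k = (k < n)%N && (k == 0%N).
Proof.
have [kn|nk] := ltnP k n.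
  by rewrite (bit_tnth _ (Ordinal kn)) tnth_mktuple.
by rewrite /bit nth_default // size_tuple.
Qed.

Hypothesis n_gt0 : (0 < n)%N.

Lemma e1_neq_zeros : (e1 == zeros n) = false.
Proof.
apply/negbTE/eqP => /(congr1 (fun x => bit x 0)).
by rewrite bit_e1 bit_zeros n_gt0.
Qed.

Lemma tail_clearE x : tail_clear x = (x == zeros n) || (x == e1).
Proof.
apply/forallP/idP => [tail0|]; last first.
  by case/orP => /eqP -> i; rewrite tnth_mktuple; case: eqP.
suff -> : x = if bit x 0 then e1 else zeros n.
  by case: (bit x 0); rewrite eqxx ?orbT.
apply: eq_from_tnth => i; rewrite -!bit_tnth.
case: (eqVneq (i : nat) 0%N) => [-> | i0].
  by case: (bit x 0); rewrite ?bit_e1 ?bit_zeros ?n_gt0.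
move: (tail0 i); rewrite i0 bit_tnth /= => /negbTE ->.
by case: (bit x 0); rewrite ?bit_e1 ?bit_zeros ?(negbTE i0) ?andbF.
Qed.

Lemma ket_tail_clear x : (tail_clear x)%:R = ket C (zeros n) x + ket C e1 x.
Proof.
rewrite tail_clearE /ket; have [->|_] := eqVneq x (zeros n).
  by rewrite eq_sym e1_neq_zeros addr0.
by rewrite add0r.
Qed.

Lemma H1C y x : H1 C y x = H1 C x y.
Proof.
rewrite /H1 /hadC andbC; congr (if _ then _ else _).
by apply: eq_forallb => i; rewrite [tnth y i == _]eq_sym.
Qed.

Lemma H1_tail_clear z x : tail_clear z ->
  H1 C z x = hadC C (bit z 0) (bit x 0) * (ket C (zeros n) x + ket C e1 x).
Proof.
move=> /forallP tz; rewrite -ket_tail_clear /H1.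
have -> : [forall i : 'I_n, ((i : nat) != 0%N) ==> (tnth z i == tnth x i)]
    = tail_clear x.
  apply: eq_forallb => i; have := tz i.
  by case: (_ != _) => //= /negbTE ->; case: (tnth x i).
by case: (tail_clear x); rewrite ?mulr1 ?mulr0.
Qed.

Lemma appl_H1 (v : bits n -> C) z : tail_clear z ->
  appl (@H1 C n) v z = hadC C (bit z 0) false * v (zeros n)
                  + hadC C (bit z 0) true * v e1.
Proof.
move=> tz; rewrite /appl.
under eq_bigr => x _ do
  rewrite H1_tail_clear // /ket mulrDr mulrDl ![_ * (_ == _)%:R * _]mulrAC.
by rewrite big_split /= !sum_mul_delta bit_zeros bit_e1 n_gt0.
Qed.

Lemma vmap_zeros s : vmap s (zeros n) = zeros n.
Proof.
apply: eq_from_tnth => i; rewrite !tnth_mktuple !bit_zeros.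
by case: ifP => //; case: ifP.
Qed.

Lemma vmap_e1 s : (1 < n)%N -> bit s 0 = false -> bit s 1 = true ->
  vmap s e1 = s.
Proof.
move=> n_gt1 s0 s1; apply: eq_from_tnth => i.
rewrite !tnth_mktuple !bit_e1 n_gt0 n_gt1 -bit_tnth.
case: (eqVneq (i : nat) 0%N) => [->|i0] //=.
case: (eqVneq (i : nat) 1%N) => [->|i1] //=.
by rewrite andbF.
Qed.

Lemma echo_rE x : echo_r C x = ket C (zeros n) x - ket C e1 x.
Proof.
rewrite /echo_r -/(tail_clear x) tail_clearE /ket.
have [->|_] := eqVneq x (zeros n).
  by rewrite eq_sym e1_neq_zeros bit_zeros subr0.
have [->|_] := eqVneq x e1; first by rewrite bit_e1 n_gt0 sub0r.
by rewrite subr0.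
Qed.

Lemma echo_r_sqr x : echo_r C x ^+ 2 = ket C (zeros n) x + ket C e1 x.
Proof.
rewrite -ket_tail_clear /echo_r -/(tail_clear x).
case: (tail_clear x); rewrite ?expr0n //.
by case: (bit x 0); rewrite ?sqrrN expr1n.
Qed.

End BitStrings.

Section Echo.
Variables (C : numClosedFieldType) (n : nat).
Variables (s : bits n) (U : bits n -> bits n -> C).
Hypotheses (n_gt1 : (1 < n)%N) (s0 : bit s 0 = false) (s1 : bit s 1 = true).
Hypotheses (U_unitary : unitary U)
           (U_zeros : forall y, appl U (ket C (zeros n)) y = ket C (zeros n) y).

Local Notation isqrt2 := ((sqrtC 2)^-1 : C).

Let n_gt0 : (0 < n)%N := ltnW n_gt1.

Lemma U_col_zeros y : U y (zeros n) = (y == zeros n)%:R.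
Proof. by rewrite -appl_ket U_zeros. Qed.

Let zeros_neq_s : zeros n != s.
Proof. by apply/eqP => /(congr1 (fun x => bit x 1)); rewrite bit_zeros s1. Qed.

Lemma appl_Vdag (f : bits n -> C) y : appl (Vdag C s) f y = f (vmap s y).
Proof.
rewrite /appl /Vdag /Vop; under eq_bigr => x _ do rewrite conjC_nat.
exact: sum_delta_mul.
Qed.

Lemma echo_prep_state y :
  appl (@Vop C n s) (appl (@H1 C n) (ket C (zeros n))) y
  = isqrt2 * ket C (zeros n) y + isqrt2 * ket C s y.
Proof.
have H1_zeros x : appl (@H1 C n) (ket C (zeros n)) x
    = isqrt2 * ket C (zeros n) x + isqrt2 * ket C (e1 n) x.
  rewrite appl_ket H1C H1_tail_clear ?tail_clearE ?eqxx // bit_zeros.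
  by rewrite /hadC mul1r mulrDr.
rewrite (eq_appl _ _ H1_zeros) appl_add !appl_scale !appl_ket.
by rewrite /Vop /ket vmap_zeros vmap_e1.
Qed.

Lemma echo_state_tail_clear z : tail_clear z ->
  echo_state s U z = (1 + htest_r C (bit z 0) * U s s) / 2.
Proof.
move=> tz; rewrite /echo_state appl_H1 // !appl_Vdag vmap_zeros vmap_e1 //.
rewrite !(eq_appl _ _ echo_prep_state) !appl_add !appl_scale !appl_ket.
rewrite !U_col_zeros eqxx eq_sym (negbTE zeros_neq_s).
rewrite (unitary_fixed_row U_unitary U_col_zeros zeros_neq_s).
rewrite /hadC /htest_r andbF andbT -invsqrtC2_sqr.
by case: (bit z 0); rewrite /=; ring.
Qed.

Lemma echo_prob_tail_clear z : tail_clear z ->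
  echo_prob s U z
  = (1 + htest_r C (bit z 0) * (2 * 'Re (U s s)) + `|U s s| ^+ 2) / 4.
Proof.
move=> tz; rewrite /echo_prob echo_state_tail_clear // normrM exprMn normfV.
rewrite normr_nat exprVn -natrX /htest_r.
case: (bit z 0); rewrite ?mulN1r ?mul1r sqrnormC_1D //.
by rewrite raddfN normrN mulrN.
Qed.

Lemma echo_meanE : echo_mean s U = 'Re (U s s).
Proof.
rewrite /echo_mean; under eq_bigr => x _ do rewrite echo_rE // mulrBr.
rewrite sumrB !sum_mul_delta !echo_prob_tail_clear ?tail_clearE ?eqxx ?orbT //.
by rewrite bit_zeros bit_e1 n_gt0 /=; field.
Qed.

Lemma echo_varE : echo_var s U = (1 + `|U s s| ^+ 2) / 2 - 'Re (U s s) ^+ 2.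
Proof.
rewrite /echo_var echo_meanE; congr (_ - _).
under eq_bigr => x _ do rewrite echo_r_sqr // mulrDr.
rewrite big_split !sum_mul_delta /=.
rewrite !echo_prob_tail_clear ?tail_clearE ?eqxx ?orbT //.
by rewrite bit_zeros bit_e1 n_gt0 /=; field.
Qed.

End Echo.

Section HadamardTest.
Variables (C : numClosedFieldType) (n : nat).
Variables (s : bits n) (U : bits n -> bits n -> C).

Lemma appl_HA (v : bool * bits n -> C) a y :
  appl (@HA C n) v (a, y)
  = hadC C a false * v (false, y) + hadC C a true * v (true, y).
Proof.
rewrite /appl sum_bool_pair /HA /=.
under eq_bigr => z _ do rewrite eq_sym mulrAC.
under [X in _ + X]eq_bigr => z _ do rewrite eq_sym mulrAC.
by rewrite !sum_mul_delta addrC.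
Qed.

Lemma appl_CU (v : bool * bits n -> C) b y :
  appl (CU U) v (b, y)
  = if b then appl U (fun z => v (true, z)) y else v (false, y).
Proof.
rewrite /appl sum_bool_pair /CU /=.
case: b => /=.
- rewrite [X in _ + X]big1 ?addr0 => [|z _]; last by rewrite !mul0r.
  by apply: eq_bigr => z _; rewrite mul1r.
- rewrite big1 ?add0r => [|z _]; last by rewrite !mul0r.
  by under eq_bigr => z _ do rewrite mul1r eq_sym; rewrite sum_delta_mul.
Qed.

Lemma htest_stateE a y :
  htest_state s U (a, y) = ((y == s)%:R + htest_r C a * U y s) / 2.
Proof.
rewrite /htest_state appl_HA !appl_CU appl_ket.
rewrite (eq_appl _ _ (fun z => appl_ket _ _ (true, z))) /HA /= appl_scale.
rewrite (appl_ket U s y) /hadC /htest_r !andbF andbT -invsqrtC2_sqr.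
by case: a; ring.
Qed.

Lemma htest_probE a : unitary U ->
  htest_prob s U a = (1 + htest_r C a * 'Re (U s s)) / 2.
Proof.
move=> U_unitary; rewrite /htest_prob.
have amp_sqr y : `|htest_state s U (a, y)| ^+ 2
    = (y == s)%:R * ((1 + htest_r C a * (2 * 'Re (U s s))) / 4)
      + `|U y s| ^+ 2 / 4.
  rewrite htest_stateE normrM exprMn normfV normr_nat exprVn -natrX /htest_r.
  have [->|ys] := eqVneq y s; last first.
    by case: a; rewrite add0r mul0r add0r ?mulN1r ?mul1r ?normrN.
  by case: a; rewrite ?mulN1r ?mul1r sqrnormC_1D ?raddfN ?normrN; field.
rewrite (eq_bigr _ (fun y _ => amp_sqr y)) big_split /= sum_delta_mul -mulr_suml.
by rewrite unitary_col_norm //; field.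
Qed.

Hypothesis U_unitary : unitary U.

Lemma htest_meanE : htest_mean s U = 'Re (U s s).
Proof. by rewrite /htest_mean big_bool /= !htest_probE // /htest_r; field. Qed.

Lemma htest_varE : htest_var s U = 1 - 'Re (U s s) ^+ 2.
Proof.
by rewrite /htest_var htest_meanE big_bool /= !htest_probE // /htest_r; field.
Qed.

End HadamardTest.

Theorem mainTheorem5 (C : numClosedFieldType) (n : nat) (s : bits n)
    (U : bits n -> bits n -> C) :
  (3 <= n)%N ->
  bit s 0 = false -> bit s 1 = true ->
  unitary U ->
  (forall y, appl U (ket C (zeros n)) y = ket C (zeros n) y) ->
  (forall v : bits n -> C, inS v -> inS (appl U v)) ->
  inS (ket C s) ->
  let m := inner (ket C s) (appl U (ket C s)) in
  [/\ htest_mean s U = 'Re m,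
      htest_var s U = 1 - ('Re m) ^+ 2,
      echo_var s U = htest_var s U - (1 - `|m| ^+ 2) / 2,
      echo_var s U <= htest_var s U
    & echo_var s U = htest_var s U <-> `|m| = 1].
Proof.
move=> n_ge3 s0 s1 U_unitary U_zeros _ _ m.
have n_gt1 : (1 < n)%N := ltnW n_ge3.
have -> : m = U s s := inner_ket_appl U s.
have gap : echo_var s U = htest_var s U - (1 - `|U s s| ^+ 2) / 2.
  by rewrite echo_varE // htest_varE //; field.
have gap_ge0 : 0 <= (1 - `|U s s| ^+ 2) / 2.
  by rewrite divr_ge0 // subr_ge0 unitary_entry_norm_le1.
split.
- exact: htest_meanE.
- exact: htest_varE.
- exact: gap.
- by rewrite gap gerBl.
- rewrite gap; split => [var_eq | m1].
  + have : (1 - `|U s s| ^+ 2) / 2 = 0.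
      by apply: (subrI (htest_var s U)); rewrite subr0.
    move/eqP; rewrite mulf_eq0 invr_eq0 pnatr_eq0 orbF subr_eq0 eq_sym.
    by rewrite sqrp_eq1 // => /eqP.
  + by rewrite m1 expr1n subrr mul0r subr0.
Qed.
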